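(* Let $\mathcal{Q}$ be an instance of $d$-GMK with time horizon $T$, and let $R(\mathcal{Q})=(E,\tilde{\mathcal{K}},\tilde{p},\mathcal{I})$ be its reduced instance. For any feasible solution $(S_t,\mathcal{A}_t)_{t=1}^T$ of $\mathcal{Q}$ there exists a feasible solution $\big(S,(\tilde{A}_{t,j})_{t\in[T],j\in[d]}\big)$ of $R(\mathcal{Q})$ such that $f_{\mathcal{Q}}((S_t)_{t=1}^T)=\tilde{p}(S)$.
   Context: $[n,m]=\{n,\dots,m\}$, $[n]=[1,n]$. A Multiple Knapsack Constraint (MKC) over a finite set $X$ is a triple $K=(w,B,W)$ with weights $w:X\to\mathbb{R}_+$, a finite set of bins $B$ and capacities $W:B\to\mathbb{R}_+$. An assignment $A:B\to 2^X$ is feasible if $\sum_{x\in A(b)}w(x)\le W(b)$ for all $b\in B$, and is an assignment of $S$ if $S=\bigcup_{b\in B}A(b)$. An instance of $d$-MKCP is $(I,\mathcal{K},p)$, $\mathcal{K}=(K_j)_{j=1}^d$ MKCs over $I$, $p:I\to\mathbb{R}_{\ge0}$; a feasible solution is $S\subseteq I$ with a tuple of feasible assignments of $S$, one for each $K_j$. A $d$-GMK instance is $\mathcal{Q}=((\mathcal{P}_t)_{t=1}^T,g^+,g^-,c^+,c^-)$ with $\mathcal{P}_t=(I,\mathcal{K}_t,p_t)$ a $d_t$-MKCP instance, $d_t\le d$, $\mathcal{K}_t=(K_{t,j})_{j=1}^{d_t}$, $K_{t,j}=(w_{t,j},B_{t,j},W_{t,j})$, $g^\pm\in\mathbb{R}_+^{I\times[2,T]}$,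 $c^\pm\in\mathbb{R}_+^{I\times[1,T]}$. A feasible solution is $(S_t,\mathcal{A}_t)_{t=1}^T$ with $(S_t,\mathcal{A}_t)$ feasible for $\mathcal{P}_t$; with $S_0=S_{T+1}=\emptyset$, $f_{\mathcal{Q}}((S_t)_{t=1}^T)=\sum_{t=1}^T\sum_{i\in S_t}p_t(i)+\sum_{t=2}^T\big(\sum_{i\in S_{t-1}\cap S_t}g^+_{i,t}+\sum_{i\notin S_{t-1}\cup S_t}g^-_{i,t}\big)-\sum_{t=1}^T\big(\sum_{i\in S_t\setminus S_{t-1}}c^+_{i,t}+\sum_{i\in S_t\setminus S_{t+1}}c^-_{i,t}\big)$. The reduced instance $R(\mathcal{Q})=(E,\tilde{\mathcal{K}},\tilde{p},\mathcal{I})$: $E=I\times 2^{[T]}$; $\mathcal{I}=\{S\subseteq E:\forall i\in I,\ |S\cap(\{i\}\times 2^{[T]})|\le1\}$; for $t\in[T]$, $j\le d_t$, $\tilde{K}_{t,j}=(\tilde{w}_{t,j},B_{t,j},W_{t,j})$ over $E$ with $\tilde{w}_{t,j}((i,D))=w_{t,j}(i)$ if $t\in D$ and $0$ otherwise; for $d_t<j\le d$, $\tilde{K}_{t,j}=(w_0,\{b\},W_0)$ with a single bin $b$, $w_0\equiv0$, $W_0(b)=0$; $\tilde{\mathcal{K}}=(\tilde{K}_{t,j})_{t\in[T],j\in[d]}$; and $\tilde{p}(S)=\sum_{(i,D)\in S}\big(\sum_{t\in D}p_t(i)+\sum_{t\in D:t-1\in D}g^+_{i,t}+\sum_{t\notin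 D:t-1\notin D}g^-_{i,t}-\sum_{t\in D:t-1\notin D}c^+_{i,t}-\sum_{t\in D:t+1\notin D}c^-_{i,t}\big)$ (sums over $t$ range over indices where the respective vector entries are defined). A feasible solution of $R(\mathcal{Q})$ is a set $S\in\mathcal{I}$ together with, for each $t\in[T],j\in[d]$, a feasible assignment $\tilde{A}_{t,j}$ of $S$ for $\tilde{K}_{t,j}$. *)

From HB Require Import structures.
From mathcomp Require Import all_boot all_order all_algebra.
Set Implicit Arguments. Unset Strict Implicit. Unset Printing Implicit Defensive.
Import Order.TTheory GRing.Theory Num.Theory.
Local Open Scope ring_scope.

Record MKC (X : Type) (R : Type) := MkMKC {
  bin : finType;
  wt  : X -> R;
  cap : bin -> R }.
Arguments bin {X R} _.
Arguments wt {X R} _ _.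
Arguments cap {X R} _ _.

Definition MKC_nonneg (X : Type) (R : numDomainType) (K : MKC X R) : Prop :=
  (forall x, 0 <= wt K x) /\ (forall b, 0 <= cap K b).
Arguments MKC_nonneg {X R} K.

Definition feasible_assign (X : finType) (R : numDomainType) (K : MKC X R)
  (A : bin K -> {set X}) : Prop :=
  forall b : bin K, \sum_(x in A b) wt K x <= cap K b.
Arguments feasible_assign {X R K} A.

Definition assign_of (X : finType) (R : Type) (K : MKC X R)
  (A : bin K -> {set X}) (S : {set X}) : Prop :=
  S = \bigcup_(b : bin K) A b.
Arguments assign_of {X R K} A S.

(* Times t are natural numbers in [1,T]; constraint indices j in [1, ndim t].
   Values of the functions outside the index ranges of the paper are unused. *)
Record GMK (I : finType) (R : Type) := MkGMK {
  ndim : nat -> nat;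
  cons : nat -> nat -> MKC I R;
  prof : nat -> I -> R;
  gp : nat -> I -> R;                (* g^+_{i,t}, t in [2,T] *)
  gm : nat -> I -> R;                (* g^-_{i,t}, t in [2,T] *)
  cp : nat -> I -> R;
  cm : nat -> I -> R }.
Arguments ndim {I R} _ _.
Arguments cons {I R} _ _ _.
Arguments prof {I R} _ _ _.
Arguments gp {I R} _ _ _.
Arguments gm {I R} _ _ _.
Arguments cp {I R} _ _ _.
Arguments cm {I R} _ _ _.

(* Q is a d-GMK instance with time horizon T.  The bin sets are assumed
   nonempty. *)
Definition GMK_wf (I : finType) (R : numDomainType) (d T : nat) (Q : GMK I R)
  : Prop :=
  forall t, (1 <= t <= T)%N ->
    [/\ (ndim Q t <= d)%N,
        (forall j, (1 <= j <= ndim Q t)%N ->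
           MKC_nonneg (cons Q t j) /\ (0 < #|bin (cons Q t j)|)%N)
      & forall i, [/\ 0 <= prof Q t i, 0 <= cp Q t i, 0 <= cm Q t i
                   & (2 <= t)%N -> 0 <= gp Q t i /\ 0 <= gm Q t i]].
Arguments GMK_wf {I R} d T Q.

Definition GMK_feasible (I : finType) (R : numDomainType) (T : nat)
  (Q : GMK I R) (S : nat -> {set I})
  (A : forall t j, bin (cons Q t j) -> {set I}) : Prop :=
  forall t j, (1 <= t <= T)%N -> (1 <= j <= ndim Q t)%N ->
    feasible_assign (A t j) /\ assign_of (A t j) (S t).
Arguments GMK_feasible {I R} T Q S A.

(* S with the convention S_0 = S_{T+1} = emptyset (and S_t only used on [0,T+1]) *)
Definition Sx (I : finType) (T : nat) (S : nat -> {set I}) (t : nat) : {set I} :=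
  if (1 <= t <= T)%N then S t else set0.
Arguments Sx {I} T S t.

Definition fQ (I : finType) (R : numDomainType) (T : nat) (Q : GMK I R)
  (S : nat -> {set I}) : R :=
  let S' := Sx T S in
  \sum_(1 <= t < T.+1) \sum_(i in S' t) prof Q t i
  + \sum_(2 <= t < T.+1)
      (\sum_(i in S' t.-1 :&: S' t) gp Q t i
       + \sum_(i in ~: (S' t.-1 :|: S' t)) gm Q t i)
  - \sum_(1 <= t < T.+1)
      (\sum_(i in S' t :\: S' t.-1) cp Q t i
       + \sum_(i in S' t :\: S' t.+1) cm Q t i).
Arguments fQ {I R} T Q S.

(* A subset D of [T] is represented as D : {set 'I_T}, where k : 'I_T stands
   for the time k+1.  tin D t  <=>  t \in D (as a subset of [T]). *)
Definition tin (T : nat) (D : {set 'I_T}) (t : nat) : bool :=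
  [exists k : 'I_T, (k \in D) && (k.+1 == t)].
Arguments tin {T} D t.

Definition Elt (I : finType) (T : nat) : finType := (I * {set 'I_T})%type.

Definition indepE (I : finType) (T : nat) (S : {set Elt I T}) : Prop :=
  forall i : I, (#|[set e in S | e.1 == i]| <= 1)%N.
Arguments indepE {I T} S.

Definition redK (I : finType) (R : numDomainType) (T : nat) (Q : GMK I R)
  (t j : nat) : MKC (Elt I T) R :=
  if (j <= ndim Q t)%N then
    @MkMKC (Elt I T) R (bin (cons Q t j))
      (fun e => if tin e.2 t then wt (cons Q t j) e.1 else 0)
      (cap (cons Q t j))
  else @MkMKC (Elt I T) R unit (fun _ => 0) (fun _ => 0).
Arguments redK {I R} T Q t j.

Definition ptil_elt (I : finType) (R : numDomainType) (T : nat) (Q : GMK I R)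
  (e : Elt I T) : R :=
  let i := e.1 in let D := e.2 in
  \sum_(1 <= t < T.+1 | tin D t) prof Q t i
  + \sum_(2 <= t < T.+1 | tin D t && tin D t.-1) gp Q t i
  + \sum_(2 <= t < T.+1 | ~~ tin D t && ~~ tin D t.-1) gm Q t i
  - \sum_(1 <= t < T.+1 | tin D t && ~~ tin D t.-1) cp Q t i
  - \sum_(1 <= t < T.+1 | tin D t && ~~ tin D t.+1) cm Q t i.
Arguments ptil_elt {I R} T Q e.

Definition ptil (I : finType) (R : numDomainType) (T : nat) (Q : GMK I R)
  (S : {set Elt I T}) : R :=
  \sum_(e in S) ptil_elt T Q e.
Arguments ptil {I R} T Q S.

Definition red_feasible (I : finType) (R : numDomainType) (d T : nat)
  (Q : GMK I R) (S : {set Elt I T})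
  (At : forall t j, bin (redK T Q t j) -> {set Elt I T}) : Prop :=
  indepE S /\
  forall t j, (1 <= t <= T)%N -> (1 <= j <= d)%N ->
    feasible_assign (At t j) /\ assign_of (At t j) S.
Arguments red_feasible {I R} d T Q S At.

From HB Require Import structures.
From mathcomp Require Import all_boot all_order all_algebra.
From mathcomp Require Import lra.
Set Implicit Arguments. Unset Strict Implicit. Unset Printing Implicit Defensive.
Import Order.TTheory GRing.Theory Num.Theory.
Local Open Scope ring_scope.

(* Every item i, packed or not, is sent to (i, D_i) with D_i = {t | i \in S_t};
   items never packed (D_i empty) must be kept, as they carry the g^- rewards.
   The weight of (i, D_i) in K~_{t,j} vanishes when i \notin S_t, so such
   elements may be thrown into any bin of K~_{t,j}, and the objective of R(Q)
   splits item by item into exactly the terms of f_Q. *)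

Lemma sum_nat_exchange_set (R : nmodType) (I : finType) (m n : nat)
    (X : nat -> {set I}) (F : nat -> I -> R) :
  \sum_(i : I) \sum_(m <= t < n | i \in X t) F t i
  = \sum_(m <= t < n) \sum_(i in X t) F t i.
Proof. by rewrite (exchange_big_dep xpredT). Qed.

Section LiftAssignment.
Variables (R : numDomainType) (X Y : finType) (K : MKC X R).
Variables (S : {set X}) (A : bin K -> {set X}).
Variables (f : X -> Y) (w : Y -> R).
Hypothesis f_inj : injective f.
Hypothesis w_f : forall x, w (f x) = if x \in S then wt K x else 0.

Let K' := MkMKC w (cap K).
Let A' (b : bin K') : {set Y} := f @: (A b :|: ~: S).

Lemma lift_feasible_assign :
  assign_of A S -> feasible_assign A -> feasible_assign A'.
Proof.
move=> AS feasA b.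
suff -> : \sum_(y in A' b) w y = \sum_(x in A b) wt K x by apply: feasA.
rewrite big_imset /=; last by move=> x y _ _ /f_inj.
rewrite [LHS]big_mkcond [RHS]big_mkcond /=; apply: eq_bigr => x _.
have AbS : x \in A b -> x \in S by rewrite AS => Ax; apply/bigcupP; exists b.
rewrite w_f !inE; case: (boolP (x \in A b)) => [/[dup] /AbS -> //| _] /=.
by case: (x \in S).
Qed.

Lemma lift_assign_of :
  (0 < #|bin K|)%N -> assign_of A S -> assign_of A' [set f x | x : X].
Proof.
case/card_gt0P=> b0 _ AS; apply/setP => y; apply/idP/bigcupP.
  case/imsetP => x _ ->.
  case: (boolP (x \in S)) => [|xNS]; last first.
    by exists b0 => //; apply/imsetP; exists x; rewrite // !inE xNS orbT.
  rewrite {1}AS => /bigcupP[b _ Abx].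
  by exists b => //; apply/imsetP; exists x; rewrite // inE Abx.
by case=> b _ /imsetP[x _ ->]; apply: imset_f.
Qed.

End LiftAssignment.

Section Reduction.
Variables (R : realFieldType) (I : finType) (T : nat) (Q : GMK I R).
Variable S : nat -> {set I}.

Definition item_times (i : I) : {set 'I_T} := [set k : 'I_T | i \in S k.+1].

Definition lift_item (i : I) : Elt I T := (i, item_times i).

Definition lift_solution : {set Elt I T} := [set lift_item i | i : I].

Lemma lift_item_inj : injective lift_item.
Proof. by move=> i j []. Qed.

Lemma tin_item_times i t : tin (item_times i) t = (i \in Sx T S t).
Proof.
rewrite /tin /Sx; apply/existsP/idP.
  by case=> k /andP[]; rewrite inE => Sk /eqP <-; rewrite ltn0Sn ltn_ord.
case: ifP => [/andP[t_gt0 t_le] Sti|]; last by rewrite inE.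
have tT : (t.-1 < T)%N by rewrite prednK.
by exists (Ordinal tT); rewrite inE /= prednK // Sti eqxx.
Qed.

Lemma lift_solution_indep : indepE lift_solution.
Proof.
move=> i; rewrite -(cards1 (lift_item i)); apply/subset_leq_card/subsetP => e.
by rewrite !inE => /andP[/imsetP[k _ ->] /eqP <-].
Qed.

Lemma lift_assignment d (A : forall t j, bin (cons Q t j) -> {set I}) t j :
  GMK_wf d T Q -> GMK_feasible T Q S A ->
  {At : bin (redK T Q t j) -> {set Elt I T} | (1 <= t <= T)%N ->
     (1 <= j <= d)%N -> feasible_assign At /\ assign_of At lift_solution}.
Proof.
move=> wf feas; rewrite /redK; case: (boolP (j <= ndim Q t)%N) => [j_le|_]; last first.
  exists (fun _ => lift_solution) => _ _; split; first by move=> b; rewrite big1.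
  by apply/setP => e; apply/idP/bigcupP => [|[]//]; exists tt.
exists (fun b => lift_item @: (A t j b :|: ~: S t)) => tT /andP[j_gt0 _].
have jQ : (1 <= j <= ndim Q t)%N by rewrite j_gt0 j_le.
have [feasA AS] := feas t j tT jQ.
have [_ /(_ j jQ) [_ bin_gt0] _] := wf t tT.
have w_lift i : (if tin (lift_item i).2 t then wt (cons Q t j) (lift_item i).1
                 else 0) = if i \in S t then wt (cons Q t j) i else 0.
  by rewrite tin_item_times /Sx tT.
split; first exact: lift_feasible_assign lift_item_inj w_lift AS feasA.
exact: lift_assign_of bin_gt0 AS.
Qed.

Lemma ptil_lift_item i :
  let S' := Sx T S in
  ptil_elt T Q (lift_item i) =
    \sum_(1 <= t < T.+1 | i \in S' t) prof Q t i
  + \sum_(2 <= t < T.+1 | i \in S' t.-1 :&: S' t) gp Q t i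
  + \sum_(2 <= t < T.+1 | i \in ~: (S' t.-1 :|: S' t)) gm Q t i
  - \sum_(1 <= t < T.+1 | i \in S' t :\: S' t.-1) cp Q t i
  - \sum_(1 <= t < T.+1 | i \in S' t :\: S' t.+1) cm Q t i.
Proof.
rewrite /ptil_elt /=.
by congr (_ + _ + _ - _ - _); apply: eq_bigl => t;
  rewrite !tin_item_times ?inE ?negb_or // andbC.
Qed.

Lemma ptil_lift_solution : ptil T Q lift_solution = fQ T Q S.
Proof.
rewrite /ptil big_imset /=; last by move=> i j _ _ /lift_item_inj.
under eq_bigr => i _ do rewrite ptil_lift_item.
rewrite !sumrB !big_split /= !sum_nat_exchange_set /fQ /= !big_split /=.
lra.
Qed.

End Reduction.

Theorem lemma7 (R : realFieldType) (I : finType) (d T : nat) (Q : GMK I R)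
  (S : nat -> {set I}) (A : forall t j, bin (cons Q t j) -> {set I}) :
  GMK_wf d T Q ->
  GMK_feasible T Q S A ->
  exists (St : {set Elt I T})
         (At : forall t j, bin (redK T Q t j) -> {set Elt I T}),
    red_feasible d T Q St At /\ fQ T Q S = ptil T Q St.
Proof.
move=> wf feas.
exists (lift_solution T S), (fun t j => sval (lift_assignment t j wf feas)).
split; last by rewrite ptil_lift_solution.
split; first exact: lift_solution_indep.
by move=> t j; apply: (svalP (lift_assignment t j wf feas)).
Qed.
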